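(* Let $a=(p_a,Rd_a,Wt_a)\in\mathsf{Lab}$ and $\beta\in\mathsf{Lab}\uplus\underline{\mathsf{Lab}}$ with $\mathsf{und}(\beta)=(p_\beta,Rd_\beta,Wt_\beta)$, and assume $Wt_a\subseteq Rd_a$ and $Wt_\beta\subseteq Rd_\beta$. Suppose $A\to_{ann}^{\underline a}A'$ and $A\to_{ann}^{\beta}A''$ with $\underline a\;\iota_{lab}\;\beta$. Then there is an annotation DAG $A'''$ such that $A''\to_{ann}^{\underline a}A'''$ and $\mathsf{diff}(A\to_{ann}^{\underline a}A')=\mathsf{diff}(A''\to_{ann}^{\underline a}A''')$.
   Context: Fix a set $\mathcal{R}$ of memory resources. Let $\mathsf{PID}=(\mathbb{N}_+)^*$ be the set of finite words over the positive integers, with $\preceq$ the prefix order. An annotation DAG is a triple $A=(V,E_R,E_W)$ such that: (1) $V\subseteq(\mathsf{PID}\times\mathbb{N})\cup\{\bot\}$ is finite, $\bot\in V$, and $(p,n)\in V$ implies $(p,n')\in V$ for all $n'\le n$; (2) $E_R,E_W\subseteq V\times\mathcal{R}\times V$, and $(v',r,v),(v'',r,v)\in E_R\cup E_W$ implies $v'=v''$; (3) $E_R\cap E_W=\varnothing$ and the directed graph $(V,E_R\cup E_W)$ is acyclic; (4) if $(v',r,v)\in E_W$ and $v'\neq\bot$ then $(v'',r,v')\in E_W$ for some $v''$; (5) $(v,r,v'),(v,r,v'')\in E_W$ implies $v'=v''$. For $r\in\mathcal{R}$, $\mathsf{last}(r,E_W)$ is $\bot$ if $E_W$ has no edge labelled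 $r$, and otherwise is the final node of the unique path from $\bot$ consisting of all $E_W$-edges labelled $r$. For $p\in\mathsf{PID}$, $\mathsf{max}_p(V)=\max\{n:(p,n)\in V\}$, or $-1$ if there is no such $n$. Let $\mathsf{Lab}=\mathsf{PID}\times2^{\mathcal{R}}\times2^{\mathcal{R}}$ and $\underline{\mathsf{Lab}}=\{\underline{a}:a\in\mathsf{Lab}\}$ a disjoint copy; $\mathsf{und}(a)=\mathsf{und}(\underline a)=a$. For $a=(p,Rd,Wt)\in\mathsf{Lab}$ and annotation DAGs $A_1=(V_1,E_{R1},E_{W1})$, $A_2=(V_2,E_{R2},E_{W2})$, write $A_1\to_{ann}^{a}A_2$ iff, with $v=(p,\mathsf{max}_p(V_1)+1)$ and $\mathsf{newedge}(r,E_W,v)=(\mathsf{last}(r,E_W),r,v)$: $V_2=V_1\cup\{v\}$, $E_{R2}=E_{R1}\cup\{\mathsf{newedge}(r,E_{W1},v): r\in Rd\setminus Wt\}$, $E_{W2}=E_{W1}\cup\{\mathsf{newedge}(r,E_{W1},v): r\in Wt\}$; and write $A_2\to_{ann}^{\underline a}A_1$ iff $A_1\to_{ann}^{a}A_2$. For $\alpha,\beta\in\mathsf{Lab}\uplus\underline{\mathsf{Lab}}$ with $\mathsf{und}(\alpha)=(p_1,Rd_1,Wt_1)$, $\mathsf{und}(\beta)=(p_2,Rd_2,Wt_2)$, define $\alpha\;\iota_{lab}\;\beta$ iff $p_1\not\preceq p_2$, $p_2\not\preceq p_1$, $Rd_1\cap Wt_2=\varnothing$ and $Rd_2\cap Wt_1=\varnothing$.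 For $o:(V,E_R,E_W)\to_{ann}^{\alpha}(V',E'_R,E'_W)$, $\mathsf{diff}(o)=(V'\setminus V,E'_R\setminus E_R,E'_W\setminus E_W)$ if $\alpha\in\mathsf{Lab}$ and $\mathsf{diff}(o)=(V\setminus V',E_R\setminus E'_R,E_W\setminus E'_W)$ if $\alpha\in\underline{\mathsf{Lab}}$. (In the paper, labels arise from basic blocks for which the set of written resources is contained in the set of read resources; this is recorded here as the hypothesis $Wt\subseteq Rd$.) *)

From mathcomp Require Import all_boot.
From mathcomp Require Import boolp classical_sets cardinality.
From Stdlib Require Import Relation_Operators.

Set Implicit Arguments.
Unset Strict Implicit.
Unset Printing Implicit Defensive.

Local Open Scope classical_set_scope.

(* PID = finite words over positive integers, encoded as seq nat with all
   entries positive; prefix order = seq's [prefix]. *)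
Definition pid_ok (p : seq nat) : Prop := all (fun k => 0 < k)%N p.

(* Nodes: None is bottom, Some (p, n) is (p, n). *)
Definition node := option (seq nat * nat).

Section AnnDag.
Variable R : Type.   (* the set of memory resources *)

Definition edge := (node * R * node)%type.

Record annot := Annot { aV : set node; aER : set edge; aEW : set edge }.

Definition estep (A : annot) (x y : node) : Prop :=
  exists r, (aER A `|` aEW A) (x, r, y).

Definition is_annot (A : annot) : Prop :=
  [/\ finite_set (aV A), aV A None,
      (forall p n, aV A (Some (p, n)) -> pid_ok p) &
      (forall p n n', aV A (Some (p, n)) -> (n' <= n)%N -> aV A (Some (p, n')))] /\
  (forall x r y, (aER A `|` aEW A) (x, r, y) -> aV A x /\ aV A y) /\
  (forall x' x'' r y, (aER A `|` aEW A) (x', r, y) ->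
                      (aER A `|` aEW A) (x'', r, y) -> x' = x'') /\
  aER A `&` aEW A = set0 /\
  (forall v, ~ clos_trans node (estep A) v v) /\
  (forall x r y, aEW A (x, r, y) -> x <> None -> exists z, aEW A (z, r, x)) /\
  (forall x r y y', aEW A (x, r, y) -> aEW A (x, r, y') -> y = y').

(* [is_last r EW v]: v is the final node of a path starting at bottom whose
   edges are exactly the r-labelled edges of EW (the empty path, ending at
   bottom, when EW has no r-edge). *)
Definition is_last (r : R) (EW : set edge) (v : node) : Prop :=
  exists xs : seq node,
    last None xs = v /\
    forall x y, EW (x, r, y) <-> (x, y) \in zip (None :: xs) xs.

Definition lastw (r : R) (EW : set edge) : node :=
  xget None [set v | is_last r EW v].

(* max_p(V) + 1 (which is 0 when max_p(V) = -1) *)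
Definition next_idx (p : seq nat) (V : set node) : nat :=
  if pselect (exists n, V (Some (p, n)))
  then (xget 0%N [set n | V (Some (p, n)) /\
                          forall m, V (Some (p, m)) -> (m <= n)%N]).+1
  else 0%N.

Definition newedge (r : R) (EW : set edge) (v : node) : edge :=
  (lastw r EW, r, v).

Record lab := Lab { lpid : seq nat; lRd : set R; lWt : set R }.

Inductive dlab := Fwd of lab | Bwd of lab.

Definition und (al : dlab) : lab := match al with Fwd a => a | Bwd a => a end.

Definition ann_step (A1 : annot) (a : lab) (A2 : annot) : Prop :=
  let v := Some (lpid a, next_idx (lpid a) (aV A1)) in
  [/\ is_annot A1, is_annot A2,
      aV A2 = aV A1 `|` [set v],
      aER A2 = aER A1 `|` [set newedge r (aEW A1) v | r in lRd a `\` lWt a] &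
      aEW A2 = aEW A1 `|` [set newedge r (aEW A1) v | r in lWt a]].

Definition ann_dstep (A1 : annot) (al : dlab) (A2 : annot) : Prop :=
  match al with
  | Fwd a => ann_step A1 a A2
  | Bwd a => ann_step A2 a A1
  end.

Definition iota_lab (al be : dlab) : Prop :=
  let a := und al in let b := und be in
  [/\ ~~ prefix (lpid a) (lpid b), ~~ prefix (lpid b) (lpid a),
      lRd a `&` lWt b = set0 & lRd b `&` lWt a = set0].

Definition diff (A1 : annot) (al : dlab) (A2 : annot)
  : set node * set edge * set edge :=
  match al with
  | Fwd _ => (aV A2 `\` aV A1, aER A2 `\` aER A1, aEW A2 `\` aEW A1)
  | Bwd _ => (aV A1 `\` aV A2, aER A1 `\` aER A2, aEW A1 `\` aEW A2)
  end.

End AnnDag.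

From mathcomp Require Import all_boot.
From mathcomp Require Import boolp classical_sets cardinality.
From Stdlib Require Import Relation_Operators.

Set Implicit Arguments.
Unset Strict Implicit.
Unset Printing Implicit Defensive.

Local Open Scope classical_set_scope.

(* A step [A1 -a-> A2] adds to [A1] the fresh node [v = (p_a, max_p_a + 1)]
   together with edges [(last r, r, v)] for the resources [r] read by [a];
   so [A2] is determined by [A1] through its "anchor" for [a]: the next index
   on [p_a] and the last writers of the resources read by [a].  Hence
   (1) the difference of [A1 -a-> A2] is exactly the added node and edges
       ([step_diff]), and two [a]-steps whose sources share the anchor for
       [a] have the same difference ([diff_same_anchor]).
   Given [A' -a-> A] and an independent [A -be-> A''], we exhibit a DAG [C]
   with [C -a-> A''] and the same anchor as [A'] ([undo_commutes]):
   (2) if [be] is a forward step [b], [C] is [A'] extended by the increment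
       of [b] ([fwd_dag]);
   (3) if [be] undoes [b], i.e. [A'' -b-> A], [C] is the intersection of
       [A'] and [A''] ([bwd_dag]).
   Validity of [C] comes from it being a well-behaved sub-DAG of a valid DAG
   ([annot_of_sub]); independence (distinct pids, no read/write conflict)
   makes the two increments disjoint and keeps the anchor of [a] intact. *)

Definition next_after (S : set nat) : nat :=
  if pselect (exists n, S n)
  then (xget 0%N [set n | S n /\ forall m, S m -> (m <= n)%N]).+1
  else 0%N.

Lemma next_idxE p (V : set node) :
  next_idx p V = next_after [set n | V (Some (p, n))].
Proof. by []. Qed.

Lemma next_after_gt (S : set nat) (B n : nat) :
  (forall m, S m -> (m <= B)%N) -> S n -> (n < next_after S)%N.
Proof.
move=> bounded Sn; rewrite /next_after.
case: (pselect (exists m, S m)) => [exS|noS] /=; last by case: noS; exists n.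
have exS' : exists m, `[< S m >] by exists n; exact/asboolP.
have bounded' : forall m, `[< S m >] -> (m <= B)%N by move=> m /asboolP/bounded.
case: (ex_maxnP exS' bounded') => k /asboolP Sk kmax.
case: xgetP => [k' _ [_ k'max] | none]; first exact: k'max.
by case: (none k); split=> // m Sm; apply/kmax/asboolP.
Qed.

Lemma next_idx_fresh p (V : set node) :
  finite_set V -> ~ V (Some (p, next_idx p V)).
Proof.
move=> /finite_seqP [s ->] ps.
have bounded : forall m, [set` s] (Some (p, m)) -> (m <= \max_(x <- s) oapp snd 0%N x)%N.
  by move=> m ms; exact: (@leq_bigmax_seq _ s xpredT (oapp snd 0%N) (Some (p, m)) ms).
by have := next_after_gt bounded ps; rewrite -next_idxE ltnn.
Qed.

Lemma next_idx_ext p (V V' : set node) :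
  (forall n, V (Some (p, n)) <-> V' (Some (p, n))) -> next_idx p V = next_idx p V'.
Proof.
move=> VV'; rewrite !next_idxE; congr next_after.
by apply/seteqP; split=> n /VV'.
Qed.

Lemma setU_swap (T : Type) (X Y P Q : set T) :
  X `|` P = Y `|` Q -> P `&` Q `<=` set0 -> Y = (X `&` Y) `|` P.
Proof.
move=> XPYQ PQ; apply/seteqP; split=> [y Yy | y [[_ Yy] | Py]] //.
  have : (X `|` P) y by rewrite XPYQ; left.
  by case=> [Xy | Py]; [left | right].
have : (Y `|` Q) y by rewrite -XPYQ; right.
by case=> // Qy; case: (PQ y).
Qed.

Lemma clos_trans_mono (T : Type) (e1 e2 : T -> T -> Prop) :
  (forall x y, e1 x y -> e2 x y) ->
  forall x y, clos_trans T e1 x y -> clos_trans T e2 x y.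
Proof.
move=> e12 x y; elim=> [u v /e12 | u v w _ IHuv _ IHvw]; first exact: t_step.
exact: t_trans IHuv IHvw.
Qed.

Section AnnotationDags.
Variable R : Type.
Implicit Types (A B C : annot R) (a b : lab R) (EW : set (edge R)) (S : set R).

Lemma lastw_ext r EW EW' :
  (forall x y, EW (x, r, y) <-> EW' (x, r, y)) -> lastw r EW = lastw r EW'.
Proof.
move=> EWE; rewrite /lastw; congr (xget None _).
by apply/seteqP; split=> v [xs [lastv edges]]; exists xs; split=> // x y;
  rewrite -edges EWE.
Qed.

Lemma mem_zip_last (h z : node) (s : seq node) :
  (last h s, z) \in zip (h :: rcons s z) (rcons s z).
Proof. by elim: s h => [|y s IH] h /=; rewrite inE ?IH ?orbT. Qed.

Lemma lastw_edge r EW :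
  lastw r EW <> None -> exists y, EW (y, r, lastw r EW).
Proof.
rewrite /lastw; case: xgetP => [x _ [xs [lastx edges]] | _] //= xN.
move: lastx xN; case/lastP: xs edges => [|s z] edges; first by move=> <-.
rewrite last_rcons => <- _; exists (last None s); apply/edges; exact: mem_zip_last.
Qed.

Lemma annot_fin A : is_annot A -> finite_set (aV A).
Proof. by case=> -[]. Qed.

Lemma annot_bot A : is_annot A -> aV A None.
Proof. by case=> -[]. Qed.

Lemma annot_closed A p n n' :
  is_annot A -> aV A (Some (p, n)) -> (n' <= n)%N -> aV A (Some (p, n')).
Proof. by case=> -[_ _ _ down_closed] _; apply: down_closed. Qed.

Lemma annot_ends A x r y :
  is_annot A -> (aER A `|` aEW A) (x, r, y) -> aV A x /\ aV A y.
Proof. by case=> _ [ends _]; apply: ends. Qed.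

Lemma annot_in_uniq A x x' r y :
  is_annot A -> (aER A `|` aEW A) (x, r, y) -> (aER A `|` aEW A) (x', r, y) ->
  x = x'.
Proof. by case=> _ [_ [in_uniq _]]; apply: in_uniq. Qed.

Lemma annot_write_pred A x r y :
  is_annot A -> aEW A (x, r, y) -> x <> None -> exists z, aEW A (z, r, x).
Proof. by case=> _ [_ [_ [_ [_ [has_pred _]]]]]; apply: has_pred. Qed.

(* A sub-DAG [C] of a valid [B] is valid as soon as it contains bottom, is
   downward closed on indices, contains the endpoints of its edges, and keeps
   the [B]-predecessor write edge of each of its write edges; finiteness,
   uniqueness of in-edges, disjointness, acyclicity and determinism are
   inherited from [B]. *)
Lemma annot_of_sub B C :
  is_annot B ->
  aV C `<=` aV B -> aER C `<=` aER B -> aEW C `<=` aEW B ->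
  aV C None ->
  (forall p n n', aV C (Some (p, n)) -> (n' <= n)%N -> aV C (Some (p, n'))) ->
  (forall x r y, (aER C `|` aEW C) (x, r, y) -> aV C x /\ aV C y) ->
  (forall x r y z, aEW C (x, r, y) -> x <> None -> aEW B (z, r, x) ->
     aEW C (z, r, x)) ->
  is_annot C.
Proof.
move=> iB sV sR sW Cbot Cclosed Cends Cpred.
have [[finB _ pidB _] [_ [uniqB [disjB [acycB [predB detB]]]]]] := iB.
have sE : aER C `|` aEW C `<=` aER B `|` aEW B by apply: setUSS.
split; first by split=> // [|p n /sV]; [exact: sub_finite_set finB | exact: pidB].
split=> //; split; first by move=> x x' r y /sE Ex /sE Ex'; apply: uniqB Ex Ex'.
split; first by apply/seteqP; split=> // e [/sR ERe /sW EWe]; rewrite -disjB.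
split.
  move=> v cyc; apply: (acycB v); apply: clos_trans_mono cyc.
  by move=> x y [r /sE Exy]; exists r.
split; last by move=> x r y y' /sW Ey /sW Ey'; apply: detB Ey Ey'.
move=> x r y Exy xN; have [z Ezx] := predB x r y (sW _ Exy) xN.
by exists z; apply: Cpred Exy xN Ezx.
Qed.

Definition fresh a (V : set node) : node := Some (lpid a, next_idx (lpid a) V).

Definition new_edges S EW (v : node) : set (edge R) :=
  [set newedge r EW v | r in S].

Lemma ann_stepE A1 a A2 :
  ann_step A1 a A2 =
  [/\ is_annot A1, is_annot A2,
      aV A2 = aV A1 `|` [set fresh a (aV A1)],
      aER A2 = aER A1 `|` new_edges (lRd a `\` lWt a) (aEW A1) (fresh a (aV A1)) &
      aEW A2 = aEW A1 `|` new_edges (lWt a) (aEW A1) (fresh a (aV A1))].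
Proof. by []. Qed.

Lemma fresh_notin A a : is_annot A -> ~ aV A (fresh a (aV A)).
Proof. by move=> /annot_fin; apply: next_idx_fresh. Qed.

Lemma new_edgesP S EW v x r y :
  new_edges S EW v (x, r, y) -> [/\ S r, x = lastw r EW & y = v].
Proof. by case=> r' Sr' [<- <- <-]. Qed.

Lemma new_edges_ext S EW EW' v :
  (forall r, S r -> lastw r EW = lastw r EW') -> new_edges S EW v = new_edges S EW' v.
Proof. by move=> lastE; apply: eq_imagel => r Sr; rewrite /newedge lastE. Qed.

Lemma new_edges_disj S S' EW EW' v w :
  v <> w -> new_edges S EW v `&` new_edges S' EW' w `<=` set0.
Proof.
by move=> vw [[x r] y] [/new_edgesP [_ _ ->] /new_edgesP [_ _ /vw]].
Qed.

Lemma new_edges_outside A S EW v :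
  is_annot A -> ~ aV A v -> (aER A `|` aEW A) `&` new_edges S EW v `<=` set0.
Proof.
move=> iA vA [[x r] y] [Exy /new_edgesP [_ _ yv]].
by apply: vA; rewrite -yv; case: (annot_ends iA Exy).
Qed.

Lemma step_diff A1 a A2 :
  ann_step A1 a A2 ->
  diff A2 (Bwd a) A1 =
  ([set fresh a (aV A1)], new_edges (lRd a `\` lWt a) (aEW A1) (fresh a (aV A1)),
   new_edges (lWt a) (aEW A1) (fresh a (aV A1))).
Proof.
rewrite ann_stepE /diff => -[iA1 _ -> -> ->].
have out S EW := @new_edges_outside A1 S EW _ iA1 (fresh_notin (a := a) iA1).
rewrite !setUKD //.
- by move=> e [Ee Ne]; exact: (out _ _ e (conj (or_intror Ee) Ne)).
- by move=> e [Ee Ne]; exact: (out _ _ e (conj (or_introl Ee) Ne)).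
- by move=> v [Vv vE]; apply: (fresh_notin (a := a) iA1); rewrite -vE.
Qed.

Definition same_anchor a A1 B1 : Prop :=
  next_idx (lpid a) (aV A1) = next_idx (lpid a) (aV B1) /\
  forall r, lRd a r -> lastw r (aEW A1) = lastw r (aEW B1).

Lemma anchor_new_edges a A1 B1 S :
  S `<=` lRd a -> same_anchor a A1 B1 ->
  new_edges S (aEW A1) (fresh a (aV A1)) = new_edges S (aEW B1) (fresh a (aV B1)).
Proof.
move=> SRd [idxE lastE]; rewrite /fresh idxE.
by apply: new_edges_ext => r /SRd; apply: lastE.
Qed.

Lemma diff_same_anchor a A1 A2 B1 B2 :
  lWt a `<=` lRd a -> ann_step A1 a A2 -> ann_step B1 a B2 ->
  same_anchor a B1 A1 -> diff A2 (Bwd a) A1 = diff B2 (Bwd a) B1.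
Proof.
move=> WtRd stepA stepB anchor; rewrite (step_diff stepA) (step_diff stepB).
have RdWt : lRd a `\` lWt a `<=` lRd a by move=> r [].
by rewrite (anchor_new_edges RdWt anchor) (anchor_new_edges WtRd anchor) /fresh anchor.1.
Qed.

Lemma ann_step_anchor a A1 C B :
  lWt a `<=` lRd a -> is_annot C -> is_annot B -> same_anchor a C A1 ->
  aV B = aV C `|` [set fresh a (aV A1)] ->
  aER B = aER C `|` new_edges (lRd a `\` lWt a) (aEW A1) (fresh a (aV A1)) ->
  aEW B = aEW C `|` new_edges (lWt a) (aEW A1) (fresh a (aV A1)) ->
  ann_step C a B.
Proof.
move=> WtRd iC iB anchor VB ERB EWB; rewrite ann_stepE.
have RdWt : lRd a `\` lWt a `<=` lRd a by move=> r [].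
rewrite (anchor_new_edges RdWt anchor) (anchor_new_edges WtRd anchor).
by rewrite /fresh anchor.1.
Qed.

Section UndoAfterForward.
Variables (a b : lab R) (A' A A'' : annot R).
Hypotheses (Wa : lWt a `<=` lRd a) (Wb : lWt b `<=` lRd b) (pab : lpid a <> lpid b)
  (RaWb : lRd a `<=` ~` lWt b) (RbWa : lRd b `<=` ~` lWt a).

Let v := fresh a (aV A').
Hypotheses (iA' : is_annot A') (VA : aV A = aV A' `|` [set v])
  (ERA : aER A = aER A' `|` new_edges (lRd a `\` lWt a) (aEW A') v)
  (EWA : aEW A = aEW A' `|` new_edges (lWt a) (aEW A') v).

Let w := fresh b (aV A).
Hypotheses (iA'' : is_annot A'') (VA'' : aV A'' = aV A `|` [set w])
  (ERA'' : aER A'' = aER A `|` new_edges (lRd b `\` lWt b) (aEW A) w)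
  (EWA'' : aEW A'' = aEW A `|` new_edges (lWt b) (aEW A) w).

Definition fwd_dag : annot R :=
  Annot (aV A' `|` [set w])
        (aER A' `|` new_edges (lRd b `\` lWt b) (aEW A) w)
        (aEW A' `|` new_edges (lWt b) (aEW A) w).

Lemma fwd_anchor : same_anchor a fwd_dag A'.
Proof.
split=> [|r Rr].
  by apply: next_idx_ext => n; split=> [[// | [/pab]] | ?]; last left.
apply: lastw_ext => x y; split=> [[//|/new_edgesP [Wr _ _]]|]; last by left.
by case: (RaWb Rr).
Qed.

Lemma fwd_fresh_neq : v <> w.
Proof. by case. Qed.

Lemma fwd_read_not_fresh r : lRd b r -> lastw r (aEW A) <> v.
Proof.
move=> Rr lastv.
have [y] : exists y, aEW A (y, r, lastw r (aEW A)) by apply: lastw_edge; rewrite lastv.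
rewrite lastv EWA => -[Eyv | /new_edgesP [Wr _ _]]; last by case: (RbWa Rr).
by apply: (fresh_notin (a := a) iA'); case: (annot_ends iA' (or_intror Eyv)).
Qed.

Lemma fwd_ends x r y :
  (aER fwd_dag `|` aEW fwd_dag) (x, r, y) -> aV fwd_dag x /\ aV fwd_dag y.
Proof.
have old_edge (E : set (edge R)) : E `<=` aER A' `|` aEW A' -> E (x, r, y) ->
    aV fwd_dag x /\ aV fwd_dag y.
  by move=> EA' /EA' /(annot_ends iA') [Vx Vy]; split; left.
have new_edge S : S `<=` lRd b -> new_edges S (aEW A) w (x, r, y) ->
    aV fwd_dag x /\ aV fwd_dag y.
  move=> SRd Nxy; have [/SRd Rr -> ->] := new_edgesP Nxy; split; last by right.
  have [] : aV A'' (lastw r (aEW A)) /\ aV A'' w.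
    apply: (annot_ends (r := r) iA''); rewrite ERA'' EWA''.
    by case: (pselect (lWt b r)) => Wr; [right; right | left; right]; exists r.
  rewrite VA'' => -[+ _ | -> _]; last by right.
  by rewrite VA => -[Vx | lastv]; [left | case: (fwd_read_not_fresh Rr lastv)].
case=> -[Exy | Nxy].
- by apply: old_edge Exy; apply: subsetUl.
- by apply: new_edge Nxy => ? [].
- by apply: old_edge Exy; apply: subsetUr.
- exact: new_edge Wb Nxy.
Qed.

Lemma fwd_annot : is_annot fwd_dag.
Proof.
have vC : ~ aV fwd_dag v.
  by case=> [/(fresh_notin (a := a) iA') | /fwd_fresh_neq].
apply: (annot_of_sub iA'').
- by rewrite VA'' VA; apply: setSU; apply: subsetUl.
- by rewrite ERA'' ERA; apply: setSU; apply: subsetUl.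
- by rewrite EWA''; apply: setSU; rewrite EWA; apply: subsetUl.
- by left; apply: annot_bot.
- move=> p n n' [Vpn | pnw] le_n'n; first by left; apply: (annot_closed iA' Vpn le_n'n).
  have : aV A'' (Some (p, n')) by apply: (annot_closed iA'' _ le_n'n); rewrite VA'' pnw; right.
  rewrite VA'' VA => -[[Vpn' | [pa _]] | pn'w]; [by left | | by right].
  by case: pab; rewrite -pa; case: pnw.
- exact: fwd_ends.
- move=> x r y z Exy xN; rewrite EWA'' => -[| Nzx]; last by right.
  rewrite EWA => -[Ezx | /new_edgesP [_ _ xv]]; first by left.
  by case: vC; rewrite -xv; case: (fwd_ends (or_intror Exy)).
Qed.

Lemma fwd_commute : ann_step fwd_dag a A''.
Proof.
apply: (ann_step_anchor Wa fwd_annot iA'' fwd_anchor).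
- by rewrite VA'' VA setUAC.
- by rewrite ERA'' ERA setUAC.
- by rewrite EWA'' {1}EWA setUAC.
Qed.

End UndoAfterForward.

Section UndoAfterBackward.
Variables (a b : lab R) (A' A A'' : annot R).
Hypotheses (Wa : lWt a `<=` lRd a) (pab : lpid a <> lpid b)
  (RaWb : lRd a `<=` ~` lWt b).

Let v := fresh a (aV A').
Hypotheses (iA' : is_annot A') (VA : aV A = aV A' `|` [set v])
  (ERA : aER A = aER A' `|` new_edges (lRd a `\` lWt a) (aEW A') v)
  (EWA : aEW A = aEW A' `|` new_edges (lWt a) (aEW A') v).

Let w := fresh b (aV A'').
Hypotheses (iA'' : is_annot A'') (iA : is_annot A) (VA'' : aV A = aV A'' `|` [set w])
  (ERA'' : aER A = aER A'' `|` new_edges (lRd b `\` lWt b) (aEW A'') w)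
  (EWA'' : aEW A = aEW A'' `|` new_edges (lWt b) (aEW A'') w).

Definition bwd_dag : annot R :=
  Annot (aV A' `&` aV A'') (aER A' `&` aER A'') (aEW A' `&` aEW A'').

Lemma bwd_fresh_neq : v <> w.
Proof. by case. Qed.

Lemma bwd_anchor : same_anchor a bwd_dag A'.
Proof.
split=> [|r Rr].
  apply: next_idx_ext => n; split=> [[] // | Vn]; split=> //.
  have : aV A (Some (lpid a, n)) by rewrite VA; left.
  by rewrite VA'' => -[// | [/pab]].
apply: lastw_ext => x y; split=> [[] // | Exy]; split=> //.
have : aEW A (x, r, y) by rewrite EWA; left.
by rewrite EWA'' => -[// | /new_edgesP [Wr _ _]]; case: (RaWb Rr).
Qed.

Lemma bwd_annot : is_annot bwd_dag.
Proof.
have sub' : aER bwd_dag `|` aEW bwd_dag `<=` aER A' `|` aEW A'.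
  by apply: setUSS; apply: subIsetl.
have sub'' : aER bwd_dag `|` aEW bwd_dag `<=` aER A'' `|` aEW A''.
  by apply: setUSS; apply: subIsetr.
apply: (annot_of_sub iA').
- exact: subIsetl.
- exact: subIsetl.
- exact: subIsetl.
- by split; [exact: annot_bot iA' | exact: annot_bot iA''].
- move=> p n n' [V'pn V''pn] le_n'n.
  by split; [apply: (annot_closed iA' V'pn) | apply: (annot_closed iA'' V''pn)].
- move=> x r y Exy.
  have [V'x V'y] := annot_ends iA' (sub' _ Exy).
  by have [V''x V''y] := annot_ends iA'' (sub'' _ Exy).
- move=> x r y z [_ E''xy] xN E'zx; split=> //.
  have [z' E''z'x] := annot_write_pred iA'' E''xy xN.
  suff -> : z = z' by [].
  apply: (annot_in_uniq (r := r) (y := x) iA); right.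
  + by rewrite EWA; left.
  + by rewrite EWA''; left.
Qed.

Lemma bwd_commute : ann_step bwd_dag a A''.
Proof.
apply: (ann_step_anchor Wa bwd_annot iA'' bwd_anchor).
- apply: (setU_swap (Q := [set w])); first by rewrite -VA -VA''.
  by move=> x [-> /bwd_fresh_neq].
- apply: (setU_swap (Q := new_edges (lRd b `\` lWt b) (aEW A'') w)).
    by rewrite -ERA -ERA''.
  exact: new_edges_disj bwd_fresh_neq.
- apply: (setU_swap (Q := new_edges (lWt b) (aEW A'') w)); first by rewrite -EWA -EWA''.
  exact: new_edges_disj bwd_fresh_neq.
Qed.

End UndoAfterBackward.

Lemma undo_commutes a be A' A A'' :
  lWt a `<=` lRd a -> lWt (und be) `<=` lRd (und be) -> lpid a <> lpid (und be) ->
  lRd a `<=` ~` lWt (und be) -> lRd (und be) `<=` ~` lWt a ->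
  ann_step A' a A -> ann_dstep A be A'' ->
  exists C, ann_step C a A'' /\ same_anchor a C A'.
Proof.
move=> Wa; rewrite ann_stepE.
case: be => b /= Wb pab RaWb RbWa [iA' iA VA ERA EWA];
  rewrite ann_stepE => -[iB1 iB2 VB ERB EWB].
- exists (fwd_dag b A' A); split; last exact: fwd_anchor.
  exact: fwd_commute Wa Wb pab RaWb RbWa iA' VA ERA EWA iB2 VB ERB EWB.
- exists (bwd_dag A' A''); split; last exact: bwd_anchor pab RaWb VA EWA VB EWB.
  exact: bwd_commute Wa pab RaWb iA' VA ERA EWA iB1 iA VB ERB EWB.
Qed.

End AnnotationDags.

Theorem mainTheorem4 (R : Type) (a : lab R) (be : dlab R) (A A' A'' : annot R) :
  pid_ok (lpid a) -> pid_ok (lpid (und be)) ->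
  lWt a `<=` lRd a -> lWt (und be) `<=` lRd (und be) ->
  ann_dstep A (Bwd a) A' -> ann_dstep A be A'' ->
  iota_lab (Bwd a) be ->
  exists A''' : annot R,
    ann_dstep A'' (Bwd a) A''' /\ diff A (Bwd a) A' = diff A'' (Bwd a) A'''.
Proof.
move=> _ _ Wa Wb stepA stepB [not_prefix _ RaWb RbWa].
have pab : lpid a <> lpid (und be).
  by move=> pE; move: not_prefix; rewrite /= pE prefix_refl.
have [C [stepC anchor]] := undo_commutes Wa Wb pab
  ((disjoints_subset _ _).1 RaWb) ((disjoints_subset _ _).1 RbWa) stepA stepB.
by exists C; split=> //; exact: (diff_same_anchor Wa (stepA : ann_step A' a A) stepC anchor).
Qed.
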